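(* Let $K$ be a compact subset of $M$ and let $U$ be a relatively open subset of $M$ with $K\subset U$. Then there is a compact set $K'$ with $K\subset K'\subset U$ such that $K'$ satisfies the bi-Lipschitz cone condition.
   Context: $\Omega\subset\mathbb{R}^n$ is a bounded, connected open set which, near each boundary point, is equivalent to a half space via a bi-Lipschitz map; $M=\bar\Omega$. Bi-Lipschitz cone condition for compact $K\subset M$: there are $r,\varepsilon>0$ such that for each $x_0\in\partial K$ there is $F:B_r(x_0)\to\mathbb{R}^n$, $F(x_0)=0$, $\varepsilon|x-y|\le|F(x)-F(y)|\le\varepsilon^{-1}|x-y|$, with $F(K\cap B_r(x_0))\supset\{(x_1,x')\in\mathbb{R}\times\mathbb{R}^{n-1}:|x'|<\varepsilon x_1<\varepsilon^2\}$. *)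

From Stdlib Require Import Reals List.
From Stdlib Require Vectors.Fin.
Open Scope R_scope.

Definition Rn (n : nat) : Type := Fin.t n -> R.

Fixpoint sumF (n : nat) : (Fin.t n -> R) -> R :=
  match n return (Fin.t n -> R) -> R with
  | O => fun _ => 0
  | S m => fun f => f Fin.F1 + sumF m (fun i => f (Fin.FS i))
  end.

Definition enorm {n : nat} (x : Rn n) : R := sqrt (sumF n (fun i => x i ^ 2)).
Definition edist {n : nat} (x y : Rn n) : R := enorm (fun i => x i - y i).

Definition ball {n : nat} (x : Rn n) (r : R) : Rn n -> Prop :=
  fun y => edist x y < r.

Definition is_open {n : nat} (A : Rn n -> Prop) : Prop :=
  forall x, A x -> exists r, 0 < r /\ forall y, ball x r y -> A y.

Definition rn_bounded {n : nat} (A : Rn n -> Prop) : Prop :=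
  exists C, forall x, A x -> enorm x <= C.

Definition rn_connected {n : nat} (A : Rn n -> Prop) : Prop :=
  forall V W : Rn n -> Prop, is_open V -> is_open W ->
    (forall x, A x -> V x \/ W x) ->
    (forall x, A x -> V x -> W x -> False) ->
    (forall x, A x -> V x) \/ (forall x, A x -> W x).

Definition rn_closure {n : nat} (A : Rn n -> Prop) : Rn n -> Prop :=
  fun x => forall r, 0 < r -> exists y, A y /\ edist x y < r.

Definition rn_boundary {n : nat} (A : Rn n -> Prop) : Rn n -> Prop :=
  fun x => rn_closure A x /\ rn_closure (fun y => ~ A y) x.

Definition rn_compact {n : nat} (K : Rn n -> Prop) : Prop :=
  forall (I : Type) (V : I -> Rn n -> Prop),
    (forall i, is_open (V i)) ->
    (forall x, K x -> exists i, V i x) ->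
    exists l : list I, forall x, K x -> exists i, In i l /\ V i x.

Definition rel_open {n : nat} (M U : Rn n -> Prop) : Prop :=
  exists V, is_open V /\ forall x, U x <-> (V x /\ M x).

Definition rn_subset {n : nat} (A B : Rn n -> Prop) : Prop := forall x, A x -> B x.

Definition bilip_on {n : nat} (eps : R) (F : Rn n -> Rn n) (D : Rn n -> Prop) : Prop :=
  forall x y, D x -> D y ->
    eps * edist x y <= edist (F x) (F y) /\ edist (F x) (F y) <= / eps * edist x y.

Definition origin {n : nat} : Rn n := fun _ => 0.

Definition bilip_halfspace_domain {m : nat} (Omega : Rn (S m) -> Prop) : Prop :=
  forall p, rn_boundary Omega p ->
    exists r L (Phi : Rn (S m) -> Rn (S m)),
      0 < r /\ 0 < L /\
      (forall i, Phi p i = 0) /\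
      bilip_on L Phi (ball p r) /\
      is_open (fun z => exists y, ball p r y /\ forall i, Phi y i = z i) /\
      (forall y, ball p r y -> (Omega y <-> 0 < Phi y Fin.F1)).

Definition cone {m : nat} (eps : R) : Rn (S m) -> Prop :=
  fun z => enorm (fun i : Fin.t m => z (Fin.FS i)) < eps * z Fin.F1 /\
           eps * z Fin.F1 < eps ^ 2.

Definition bilip_cone_condition {m : nat} (K : Rn (S m) -> Prop) : Prop :=
  exists r eps, 0 < r /\ 0 < eps /\
    forall x0, rn_boundary K x0 ->
      exists F : Rn (S m) -> Rn (S m),
        (forall i, F x0 i = 0) /\
        bilip_on eps F (ball x0 r) /\
        forall z, cone eps z ->
          exists y, K y /\ ball x0 r y /\ forall i, F y i = z i.

From Stdlib Require Import Reals List Lra Psatz Rtopology.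
From Stdlib Require Vectors.Fin.
From Stdlib Require Import FunctionalExtensionality ClassicalEpsilon Classical.
Open Scope R_scope.

(* Around each point x of K take a bi-Lipschitz chart (a translation near interior points of
   Omega, the given half-space chart near boundary points) and the preimage of a small box in
   it, a half box at boundary points.  Such a piece is compact, lies in U and contains K near x;
   finitely many pieces cover K, and K' is their union.  A boundary point of K' lies in some
   piece, and composing that piece's chart with a sign flip and a shear sends a small cone into
   the box, because from any point of a box each coordinate can move by half the width towards
   the farther face.  Minima over the finitely many pieces make r and eps uniform. *)

(** * Euclidean norm and distance *)

Definition rtail {n : nat} (x : Rn (S n)) : Rn n := fun i => x (Fin.FS i).

Definition vcons {n : nat} (t : R) (y : Rn n) : Rn (S n) :=
  fun i => Fin.caseS' i (fun _ => R) t y.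

Lemma Rabs_le_inv a b : Rabs a <= b -> - b <= a <= b.
Proof.
  intros H; pose proof (Rle_abs a); pose proof (Rle_abs (- a)); rewrite Rabs_Ropp in *; lra.
Qed.

Lemma Rle_div_mul a b k : 0 < k -> a <= b / k -> a * k <= b.
Proof.
  intros Hk H; apply (Rmult_le_compat_r k) in H; [|lra].
  now replace (b / k * k) with b in H by (field; lra).
Qed.

Lemma sumF_ext n (f g : Fin.t n -> R) : (forall i, f i = g i) -> sumF n f = sumF n g.
Proof.
  revert f g; induction n as [|n IH]; intros f g H; simpl; [reflexivity|].
  now rewrite H, (IH _ (fun i => g (Fin.FS i))).
Qed.

Lemma sumF_le n (f g : Fin.t n -> R) : (forall i, f i <= g i) -> sumF n f <= sumF n g.
Proof.
  revert f g; induction n as [|n IH]; intros f g H; simpl; [lra|].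
  pose proof (H Fin.F1).
  pose proof (IH (fun i => f (Fin.FS i)) (fun i => g (Fin.FS i)) (fun i => H _)); lra.
Qed.

Lemma sumF_const n c : sumF n (fun _ => c) = INR n * c.
Proof. induction n as [|n IH]; simpl sumF; [simpl; ring|]. rewrite IH, S_INR; ring. Qed.

Lemma sumF_scale n c (f : Fin.t n -> R) : sumF n (fun i => c * f i) = c * sumF n f.
Proof. revert f; induction n as [|n IH]; intros f; simpl; [ring|]. rewrite IH; ring. Qed.

Lemma sumF_sq_nonneg n (x : Rn n) : 0 <= sumF n (fun i => x i ^ 2).
Proof.
  rewrite <- (Rmult_0_r (INR n)), <- sumF_const.
  apply sumF_le; intros; apply pow2_ge_0.
Qed.

Lemma enorm_nonneg n (x : Rn n) : 0 <= enorm x.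
Proof. apply sqrt_pos. Qed.

Lemma enorm_ext n (x y : Rn n) : (forall i, x i = y i) -> enorm x = enorm y.
Proof. intros H; unfold enorm; f_equal; apply sumF_ext; intros; now rewrite H. Qed.

Lemma enorm_zero n : enorm (fun _ : Fin.t n => 0) = 0.
Proof.
  unfold enorm; rewrite (sumF_ext _ _ (fun _ => 0)) by (intros; ring).
  rewrite sumF_const, Rmult_0_r; apply sqrt_0.
Qed.

Lemma enorm_head_tail n (x : Rn (S n)) : enorm x = sqrt (x Fin.F1 ^ 2 + enorm (rtail x) ^ 2).
Proof.
  unfold enorm at 1; simpl sumF; f_equal.
  unfold enorm; rewrite pow2_sqrt; [reflexivity | apply sumF_sq_nonneg].
Qed.

Lemma enorm_scale n c (x : Rn n) : enorm (fun i => c * x i) = Rabs c * enorm x.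
Proof.
  unfold enorm; rewrite (sumF_ext _ _ (fun i => c ^ 2 * x i ^ 2)) by (intros; ring).
  rewrite sumF_scale, sqrt_mult_alt by apply pow2_ge_0.
  now rewrite <- (pow2_abs c), sqrt_pow2 by apply Rabs_pos.
Qed.

Lemma sqrt_sum_sq_le a b : sqrt (a ^ 2 + b ^ 2) <= Rabs a + Rabs b.
Proof.
  pose proof (Rabs_pos a); pose proof (Rabs_pos b).
  rewrite <- (sqrt_pow2 (Rabs a + Rabs b)) by lra.
  apply sqrt_le_1_alt; rewrite <- (pow2_abs a), <- (pow2_abs b) at 1; nra.
Qed.

Lemma Rabs_coord_le_enorm n (x : Rn n) i : Rabs (x i) <= enorm x.
Proof.
  revert x; induction i as [n|n i IH]; intros x; rewrite enorm_head_tail.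
  - rewrite <- sqrt_Rsqr_abs; apply sqrt_le_1_alt; unfold Rsqr.
    pose proof (pow2_ge_0 (enorm (rtail x))); nra.
  - eapply Rle_trans; [apply (IH (rtail x))|].
    rewrite <- (sqrt_pow2 (enorm (rtail x))) at 1 by apply enorm_nonneg.
    apply sqrt_le_1_alt; pose proof (pow2_ge_0 (x Fin.F1)); lra.
Qed.

Lemma enorm_le_sum_abs n (x : Rn n) : enorm x <= sumF n (fun i => Rabs (x i)).
Proof.
  induction n as [|n IH].
  - unfold enorm; simpl; rewrite sqrt_0; lra.
  - rewrite enorm_head_tail; simpl sumF.
    eapply Rle_trans; [apply sqrt_sum_sq_le|].
    rewrite (Rabs_right (enorm _)) by apply Rle_ge, enorm_nonneg.
    pose proof (IH (rtail x)); unfold rtail in *; lra.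
Qed.

Lemma minkowski2 a b c1 c2 : 0 <= c1 -> 0 <= c2 ->
  sqrt ((a + b) ^ 2 + (c1 + c2) ^ 2) <= sqrt (a ^ 2 + c1 ^ 2) + sqrt (b ^ 2 + c2 ^ 2).
Proof.
  intros H1 H2.
  set (p := sqrt (a ^ 2 + c1 ^ 2)); set (q := sqrt (b ^ 2 + c2 ^ 2)).
  assert (Hp : 0 <= p) by apply sqrt_pos; assert (Hq : 0 <= q) by apply sqrt_pos.
  assert (Hp2 : p * p = a ^ 2 + c1 ^ 2) by (apply sqrt_sqrt; nra).
  assert (Hq2 : q * q = b ^ 2 + c2 ^ 2) by (apply sqrt_sqrt; nra).
  assert (Hcs : a * b + c1 * c2 <= p * q).
  { destruct (Rle_dec (a * b + c1 * c2) 0); [nra|].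
    apply Rsqr_incr_0_var; [unfold Rsqr | nra].
    replace (p * q * (p * q)) with (p * p * (q * q)) by ring.
    rewrite Hp2, Hq2; pose proof (pow2_ge_0 (a * c2 - b * c1)); nra. }
  rewrite <- (sqrt_pow2 (p + q)) by lra; apply sqrt_le_1_alt; nra.
Qed.

Lemma enorm_triangle n (x y : Rn n) : enorm (fun i => x i + y i) <= enorm x + enorm y.
Proof.
  induction n as [|n IH].
  - unfold enorm; simpl; rewrite sqrt_0; lra.
  - rewrite !enorm_head_tail.
    eapply Rle_trans; [| apply minkowski2; apply enorm_nonneg].
    apply sqrt_le_1_alt.
    pose proof (IH (rtail x) (rtail y)).
    pose proof (enorm_nonneg _ (fun i => rtail x i + rtail y i)).
    change (rtail (fun i => x i + y i)) with (fun i => rtail x i + rtail y i); nra.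
Qed.

Lemma edist_ext n (x x' y y' : Rn n) :
  (forall i, x i = x' i) -> (forall i, y i = y' i) -> edist x y = edist x' y'.
Proof. intros H1 H2; unfold edist; apply enorm_ext; intros; now rewrite H1, H2. Qed.

Lemma edist_nonneg n (x y : Rn n) : 0 <= edist x y.
Proof. apply enorm_nonneg. Qed.

Lemma edist_refl n (x : Rn n) : edist x x = 0.
Proof. unfold edist; rewrite (enorm_ext _ _ (fun _ => 0)) by (intros; ring); apply enorm_zero. Qed.

Lemma edist_sym n (x y : Rn n) : edist x y = edist y x.
Proof.
  unfold edist; rewrite (enorm_ext _ (fun i => y i - x i) (fun i => -1 * (x i - y i))) by (intros; ring).
  rewrite enorm_scale, Rabs_left by lra; ring.
Qed.

Lemma edist_origin n (z : Rn n) : edist origin z = enorm z.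
Proof.
  unfold edist, origin; rewrite (enorm_ext _ _ (fun i => -1 * z i)) by (intros; ring).
  rewrite enorm_scale, Rabs_left by lra; ring.
Qed.

Lemma edist_triangle n (x y z : Rn n) : edist x z <= edist x y + edist y z.
Proof.
  unfold edist; rewrite (enorm_ext _ _ (fun i => (x i - y i) + (y i - z i))) by (intros; ring).
  apply enorm_triangle.
Qed.

Lemma Rabs_coord_le_edist n (x y : Rn n) i : Rabs (x i - y i) <= edist x y.
Proof. apply (Rabs_coord_le_enorm _ (fun i => x i - y i)). Qed.

Lemma edist_eq0 n (x y : Rn n) : edist x y = 0 -> x = y.
Proof.
  intros H; apply functional_extensionality; intros i.
  pose proof (Rabs_coord_le_edist _ x y i); pose proof (Rabs_pos (x i - y i)).
  destruct (Req_dec (x i - y i) 0) as [E|E]; [lra|].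
  apply Rabs_no_R0 in E; lra.
Qed.

Lemma edist_le_coord_bound n (x y : Rn n) d :
  (forall i, Rabs (x i - y i) <= d) -> edist x y <= INR n * d.
Proof.
  intros H; eapply Rle_trans; [apply enorm_le_sum_abs|].
  rewrite <- sumF_const; now apply sumF_le.
Qed.

Lemma ball_center n (x : Rn n) r : 0 < r -> ball x r x.
Proof. intros; unfold ball; now rewrite edist_refl. Qed.

Lemma ball_open n (x : Rn n) r : is_open (ball x r).
Proof.
  intros y Hy; exists (r - edist x y); split; [unfold ball in Hy; lra|].
  intros z Hz; unfold ball in *; pose proof (edist_triangle _ x y z); lra.
Qed.

(** * Compactness *)

Lemma list_forall_small {J : Type} (l : list J) (P : J -> R -> Prop) :
  (forall j, In j l -> exists e, 0 < e /\ forall e', 0 < e' <= e -> P j e') ->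
  exists e, 0 < e /\ forall j, In j l -> forall e', 0 < e' <= e -> P j e'.
Proof.
  induction l as [|a l IH]; intros H.
  - exists 1; split; [lra | intros j []].
  - destruct (H a (or_introl eq_refl)) as [ea [Hea Pa]].
    destruct IH as [e [He Pl]]; [intros j Hj; apply H; now right|].
    exists (Rmin ea e); split; [now apply Rmin_glb_lt|].
    pose proof (Rmin_l ea e); pose proof (Rmin_r ea e).
    intros j [<-|Hj] e' He'; [apply Pa | apply Pl]; auto; lra.
Qed.

Lemma rn_compact_closed n (K : Rn n -> Prop) x : rn_compact K -> rn_closure K x -> K x.
Proof.
  intros HK Hcl; apply NNPP; intros Kx.
  destruct (HK {r : R | 0 < r} (fun r y => proj1_sig r < edist x y)) as [l Hl].
  - intros [r Hr] y Hy; simpl in Hy; exists (edist x y - r); split; [lra|].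
    intros z Hz; unfold ball in Hz; simpl.
    pose proof (edist_triangle _ x z y); rewrite (edist_sym _ z y) in *; lra.
  - intros y Ky.
    assert (Hd : 0 < edist x y).
    { destruct (Rle_lt_or_eq_dec _ _ (edist_nonneg _ x y)) as [|E]; auto.
      symmetry in E; apply edist_eq0 in E; subst; contradiction. }
    assert (Hd2 : 0 < edist x y / 2) by lra.
    exists (exist _ _ Hd2); simpl; lra.
  - destruct (list_forall_small l (fun r e => e <= proj1_sig r)) as [e [He Hle]].
    { intros [r Hr] _; exists r; split; [exact Hr | simpl; intros; lra]. }
    destruct (Hcl e He) as [y [Ky Hxy]]; destruct (Hl y Ky) as [r [Hr Hry]].
    specialize (Hle r Hr e (conj He (Rle_refl e))); simpl in Hle; lra.
Qed.

Lemma rn_compact_list_union {J : Type} n (l : list J) (P : J -> Rn n -> Prop) :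
  (forall j, In j l -> rn_compact (P j)) -> rn_compact (fun x => exists j, In j l /\ P j x).
Proof.
  induction l as [|a l IH]; intros H I V HV Hcov.
  - exists nil; intros x [j [[] _]].
  - destruct (H a (or_introl eq_refl) I V HV) as [l1 H1].
    { intros x Hx; apply Hcov; exists a; split; [now left | exact Hx]. }
    destruct (IH (fun j Hj => H j (or_intror Hj)) I V HV) as [l2 H2].
    { intros x [j [Hj Hx]]; apply Hcov; exists j; split; [now right | exact Hx]. }
    exists (l1 ++ l2); intros x [j [[<-|Hj] Hx]].
    + destruct (H1 x Hx) as [i [Hi Hv]]; exists i; split; [apply in_or_app|]; auto.
    + destruct (H2 x (ex_intro _ j (conj Hj Hx))) as [i [Hi Hv]].
      exists i; split; [apply in_or_app|]; auto.
Qed.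

Lemma rn_compact_bilip_preimage n (c : Rn n) R L (G : Rn n -> Rn n) (C : Rn n -> Prop) :
  0 < L -> bilip_on L G (ball c R) -> rn_compact C ->
  (forall z, C z -> exists y, ball c R y /\ G y = z) ->
  rn_compact (fun y => ball c R y /\ C (G y)).
Proof.
  intros HL HG HC Hsur I V HV Hcov.
  destruct (HC I (fun i z => exists rho, 0 < rho /\
                    forall y, ball c R y -> edist z (G y) < rho -> V i y)) as [l Hl].
  - intros i z [rho [Hr H]]; exists (rho / 2); split; [lra|].
    intros z' Hz'; exists (rho / 2); split; [lra|].
    intros y Hy Hd; apply H; auto; unfold ball in Hz'.
    pose proof (edist_triangle _ z z' (G y)); lra.
  - intros z Hz; destruct (Hsur z Hz) as [y [Hy Hyz]]; subst z.
    destruct (Hcov y (conj Hy Hz)) as [i Hi]; destruct (HV i y Hi) as [s [Hs Hbs]].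
    exists i, (L * s); split; [nra|].
    intros y' Hy' Hd; apply Hbs; unfold ball.
    destruct (HG y y' Hy Hy') as [H1 _]; nra.
  - exists l; intros y [Hy Hb]; destruct (Hl (G y) Hb) as [i [Hin [rho [Hr H]]]].
    exists i; split; auto; apply H; auto; now rewrite edist_refl.
Qed.

Lemma edist_vcons_le n t (y : Rn n) (x : Rn (S n)) :
  edist (vcons t y) x <= Rabs (t - x Fin.F1) + edist y (rtail x).
Proof.
  unfold edist at 1; rewrite enorm_head_tail.
  eapply Rle_trans; [apply sqrt_sum_sq_le|].
  rewrite (Rabs_right (enorm _)) by apply Rle_ge, enorm_nonneg; right; reflexivity.
Qed.

Lemma edist_vcons n t (y y' : Rn n) : edist (vcons t y) (vcons t y') = edist y y'.
Proof.
  unfold edist at 1; rewrite enorm_head_tail; simpl.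
  replace ((t - t) * ((t - t) * 1)) with 0 by ring.
  rewrite Rplus_0_l; apply sqrt_pow2, enorm_nonneg.
Qed.

Lemma tube_lemma n (B : Rn n -> Prop) (I : Type) (V : I -> Rn (S n) -> Prop) t :
  rn_compact B -> (forall i, is_open (V i)) -> (forall y, B y -> exists i, V i (vcons t y)) ->
  exists rho l, 0 < rho /\ forall x, Rabs (x Fin.F1 - t) < rho -> B (rtail x) ->
    exists i, In i l /\ V i x.
Proof.
  intros HB HV Hcov.
  destruct (HB I (fun i y => V i (vcons t y))) as [l Hl]; auto.
  { intros i y Hy; destruct (HV i _ Hy) as [s [Hs Hb]]; exists s; split; auto.
    intros y' Hy'; apply Hb; unfold ball; now rewrite edist_vcons. }
  set (W := fun x => exists i, In i l /\ V i x).
  set (J := {p : Rn n * R | 0 < snd p /\ forall x, ball (vcons t (fst p)) (2 * snd p) x -> W x}).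
  destruct (HB J (fun p => ball (fst (proj1_sig p)) (snd (proj1_sig p)))) as [l2 Hl2].
  - intros p; apply ball_open.
  - intros y Hy; destruct (Hl y Hy) as [i [Hi Hv]]; destruct (HV i _ Hv) as [s [Hs Hb]].
    assert (Hp : 0 < snd (y, s / 2) /\
                 forall x, ball (vcons t (fst (y, s / 2))) (2 * snd (y, s / 2)) x -> W x).
    { simpl; split; [lra|]; intros x Hx; exists i; split; auto; apply Hb; unfold ball in *; lra. }
    exists (exist _ (y, s / 2) Hp); simpl; apply ball_center; lra.
  - destruct (list_forall_small l2 (fun p e => e <= snd (proj1_sig p))) as [e [He Hle]].
    { intros [p [Hp HW]] _; exists (snd p); split; [exact Hp | simpl; intros; lra]. }
    exists e, l; split; auto; intros x Hx Hb.
    destruct (Hl2 (rtail x) Hb) as [[p [Hp HW]] [Hin Hpx]]; simpl in Hpx.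
    apply HW; unfold ball in *; specialize (Hle _ Hin e (conj He (Rle_refl e))); simpl in Hle.
    pose proof (edist_vcons_le _ t (fst p) x); rewrite Rabs_minus_sym in Hx; lra.
Qed.

Lemma interval_prod_compact n a b (B : Rn n -> Prop) :
  rn_compact B -> rn_compact (fun x : Rn (S n) => a <= x Fin.F1 <= b /\ B (rtail x)).
Proof.
  intros HB I V HV Hcov.
  assert (Htube : forall t, exists q : R * list I, a <= t <= b -> 0 < fst q /\
            forall x, Rabs (x Fin.F1 - t) < fst q -> B (rtail x) -> exists i, In i (snd q) /\ V i x).
  { intros t; destruct (classic (a <= t <= b)) as [Ht|Ht]; [|exists (1, nil); tauto].
    destruct (tube_lemma n B I V t HB HV) as [rho [l [Hr Hl]]].
    - intros y Hy; apply Hcov; split; [exact Ht | exact Hy].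
    - exists (rho, l); intros _; simpl; auto. }
  set (g := fun t => proj1_sig (constructive_indefinite_description _ (Htube t))).
  assert (Hg : forall t, a <= t <= b -> 0 < fst (g t) /\ forall x, Rabs (x Fin.F1 - t) < fst (g t) ->
                 B (rtail x) -> exists i, In i (snd (g t)) /\ V i x).
  { intros t; unfold g; destruct (constructive_indefinite_description _ (Htube t)); simpl; auto. }
  assert (Hdom : forall t, (exists s, a <= t <= b /\ Rabs (s - t) < fst (g t)) -> a <= t <= b).
  { intros t [s [H _]]; exact H. }
  destruct (compact_P3 a b (mkfamily (fun t => a <= t <= b)
              (fun t s => a <= t <= b /\ Rabs (s - t) < fst (g t)) Hdom)) as [D [HD [ts Hts]]].
  - split.
    + intros s Hs; exists s; simpl; split; auto; rewrite Rminus_diag, Rabs_R0; now apply Hg.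
    + intros t s [Ht Hs]; assert (Hp : 0 < fst (g t) - Rabs (s - t)) by lra.
      exists (mkposreal _ Hp); intros y Hy; unfold disc in Hy; simpl in *; split; auto.
      pose proof (Rabs_triang (y - s) (s - t)); replace (y - s + (s - t)) with (y - t) in * by ring.
      lra.
  - exists (flat_map (fun t => snd (g t)) ts); intros x [H1 H2].
    destruct (HD (x Fin.F1) H1) as [t [[Ht Hd] Dt]].
    destruct (proj2 (Hg t Ht) x Hd H2) as [i [Hi Hv]].
    exists i; split; auto; apply in_flat_map; exists t; split; auto; apply Hts; now split.
Qed.

Definition box {n : nat} (lo hi : Rn n) : Rn n -> Prop := fun z => forall i, lo i <= z i <= hi i.

Lemma box_head_tail n (lo hi x : Rn (S n)) :
  box lo hi x <-> lo Fin.F1 <= x Fin.F1 <= hi Fin.F1 /\ box (rtail lo) (rtail hi) (rtail x).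
Proof.
  split; [intros H; split; [apply H | intros i; apply H]|].
  intros [H1 H2] i; pattern i; apply Fin.caseS'; auto.
Qed.

Lemma box_compact n (lo hi : Rn n) : rn_compact (box lo hi).
Proof.
  induction n as [|n IH].
  - intros I V HV Hcov.
    destruct (Hcov lo) as [i Hi]; [intros j; exact (Fin.case0 (fun j => lo j <= lo j <= hi j) j)|].
    destruct (HV i lo Hi) as [r [Hr Hb]]; exists (i :: nil); intros y _; exists i; split; [now left|].
    apply Hb; unfold ball, edist, enorm; simpl; rewrite sqrt_0; lra.
  - intros I V HV Hcov.
    destruct (interval_prod_compact n (lo Fin.F1) (hi Fin.F1) _ (IH (rtail lo) (rtail hi)) I V HV)
      as [l Hl].
    + intros x Hx; apply Hcov, box_head_tail, Hx.
    + exists l; intros x Hx; apply Hl, box_head_tail, Hx.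
Qed.

Definition lipschitz {n : nat} (k : R) (T : Rn n -> Rn n) : Prop :=
  forall a b, edist (T a) (T b) <= k * edist a b.

Lemma bilip_on_comp n (L eps k : R) (G T T' : Rn n -> Rn n) (D : Rn n -> Prop) :
  0 < L -> 0 < eps -> 0 < k -> eps * k <= L ->
  lipschitz k T -> lipschitz k T' -> (forall u, T' (T u) = u) ->
  bilip_on L G D -> bilip_on eps (fun y => T (G y)) D.
Proof.
  intros HL He Hk Hek HT HT' HTT' HG y y' Hy Hy'.
  destruct (HG y y' Hy Hy') as [Hlo Hup].
  pose proof (HT (G y) (G y')); pose proof (HT' (T (G y)) (T (G y'))); rewrite !HTT' in *.
  pose proof (edist_nonneg _ y y'); pose proof (edist_nonneg _ (G y) (G y')).
  assert (HLup : L * edist (G y) (G y') <= edist y y').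
  { apply (Rmult_le_compat_l L) in Hup; [|lra].
    rewrite <- Rmult_assoc, Rinv_r, Rmult_1_l in Hup by lra; exact Hup. }
  split; [nra|].
  apply (Rmult_le_reg_l eps); [exact He|].
  rewrite <- Rmult_assoc, Rinv_r, Rmult_1_l by lra; nra.
Qed.

Lemma bilip_up n L (G : Rn n -> Rn n) D a b : 0 < L -> bilip_on L G D -> D a -> D b ->
  L * edist (G a) (G b) <= edist a b.
Proof.
  intros HL H Ha Hb; destruct (H a b Ha Hb) as [_ H2].
  apply (Rmult_le_compat_l L) in H2; [|lra].
  rewrite <- Rmult_assoc, Rinv_r, Rmult_1_l in H2 by lra; exact H2.
Qed.

(** * Straightening a cone by a sign flip and a shear *)

Definition is_sign {n : nat} (s : Rn n) : Prop := forall i, s i * s i = 1.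

Definition flip {n : nat} (s u : Rn n) : Rn n := fun i => s i * u i.

Lemma flipK n (s u : Rn n) : is_sign s -> flip s (flip s u) = u.
Proof.
  intros Hs; apply functional_extensionality; intros i; unfold flip.
  rewrite <- Rmult_assoc, Hs; ring.
Qed.

Lemma edist_flip n (s a b : Rn n) : is_sign s -> edist (flip s a) (flip s b) = edist a b.
Proof.
  intros Hs; unfold edist, enorm, flip; f_equal; apply sumF_ext; intros i.
  replace ((s i * a i - s i * b i) ^ 2) with (s i * s i * (a i - b i) ^ 2) by ring.
  rewrite Hs; ring.
Qed.

Definition tail_ind {m : nat} (i : Fin.t (S m)) : R :=
  match i with Fin.F1 => 0 | Fin.FS _ => 1 end.

Lemma tail_ind_01 m (i : Fin.t (S m)) : tail_ind i = 0 \/ tail_ind i = 1.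
Proof. pattern i; apply Fin.caseS'; simpl; auto. Qed.

Lemma enorm_tail_ind m : enorm (@tail_ind m) <= INR m.
Proof.
  eapply Rle_trans; [apply enorm_le_sum_abs|]; simpl sumF; rewrite Rabs_R0.
  rewrite (sumF_ext _ _ (fun _ => 1)) by (intros; apply Rabs_R1).
  rewrite sumF_const; lra.
Qed.

Lemma enorm_head_unit m : enorm (fun i : Fin.t (S m) => 1 - tail_ind i) = 1.
Proof.
  rewrite enorm_head_tail; simpl.
  rewrite (enorm_ext _ (rtail _) (fun _ => 0)) by (intros; unfold rtail; simpl; ring).
  rewrite enorm_zero; replace ((1 - 0) * ((1 - 0) * 1) + 0 * (0 * 1)) with 1 by ring.
  apply sqrt_1.
Qed.

Definition shear {m : nat} (c : R) (u : Rn (S m)) : Rn (S m) :=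
  fun i => u i + c * tail_ind i * u Fin.F1.

Lemma shear_shear m c c' (u : Rn (S m)) : shear c (shear c' u) = shear (c + c') u.
Proof.
  apply functional_extensionality; intros i; unfold shear.
  change (tail_ind (@Fin.F1 m)) with 0; ring.
Qed.

Lemma shear0 m (u : Rn (S m)) : shear 0 u = u.
Proof. apply functional_extensionality; intros i; unfold shear; ring. Qed.

Lemma lipschitz_shear m c : Rabs c <= 1 -> lipschitz (1 + INR m) (@shear m c).
Proof.
  intros Hc a b; unfold edist.
  set (u := fun i => a i - b i).
  rewrite (enorm_ext _ _ (fun i => u i + (c * u Fin.F1) * tail_ind i)) by (intros; unfold u, shear; ring).
  eapply Rle_trans; [apply enorm_triangle|]; rewrite enorm_scale, Rabs_mult.
  pose proof (Rabs_coord_le_enorm _ u Fin.F1); pose proof (enorm_tail_ind m).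
  pose proof (Rabs_pos c); pose proof (Rabs_pos (u Fin.F1)); pose proof (pos_INR m).
  pose proof (enorm_nonneg _ (@tail_ind m)).
  assert (Rabs c * Rabs (u Fin.F1) <= enorm u) by nra.
  nra.
Qed.

(* The shear maps the cone [|x'| < eps x1] into the nonnegative orthant; the signs [s], chosen
   by [far_side] below, then point each coordinate towards the farther face of a box. *)
Definition cone_chart {m : nat} (s w u : Rn (S m)) : Rn (S m) :=
  shear (-1) (flip s (fun i => u i - w i)).

Definition cone_chart_inv {m : nat} (s w v : Rn (S m)) : Rn (S m) :=
  fun i => w i + flip s (shear 1 v) i.

Section ConeChart.
Variables (m : nat) (s w : Rn (S m)).
Hypothesis Hs : is_sign s.

Lemma cone_chart_invK u : cone_chart_inv s w (cone_chart s w u) = u.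
Proof.
  unfold cone_chart, cone_chart_inv; rewrite shear_shear.
  replace (1 + -1) with 0 by ring; rewrite shear0, flipK by exact Hs.
  apply functional_extensionality; intros; ring.
Qed.

Lemma cone_chartK v : cone_chart s w (cone_chart_inv s w v) = v.
Proof.
  unfold cone_chart, cone_chart_inv.
  replace (fun i => w i + flip s (shear 1 v) i - w i) with (flip s (shear 1 v))
    by (apply functional_extensionality; intros; ring).
  rewrite flipK, shear_shear by exact Hs.
  replace (-1 + 1) with 0 by ring; apply shear0.
Qed.

Lemma cone_chart_base : cone_chart s w w = origin.
Proof.
  apply functional_extensionality; intros i; unfold cone_chart, shear, flip, origin; ring.
Qed.

Lemma cone_chart_inv_origin : cone_chart_inv s w origin = w.
Proof.
  apply functional_extensionality; intros i; unfold cone_chart_inv, shear, flip, origin; ring.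
Qed.

Lemma lipschitz_cone_chart : lipschitz (1 + INR m) (cone_chart s w).
Proof.
  intros a b; unfold cone_chart.
  eapply Rle_trans; [apply lipschitz_shear; rewrite Rabs_left; lra|].
  rewrite edist_flip by exact Hs.
  right; f_equal; unfold edist; apply enorm_ext; intros; ring.
Qed.

Lemma lipschitz_cone_chart_inv : lipschitz (1 + INR m) (cone_chart_inv s w).
Proof.
  intros a b; unfold cone_chart_inv.
  replace (edist _ _) with (edist (flip s (shear 1 a)) (flip s (shear 1 b)))
    by (unfold edist; apply enorm_ext; intros; ring).
  rewrite edist_flip by exact Hs; apply lipschitz_shear; rewrite Rabs_R1; lra.
Qed.

End ConeChart.

Lemma cone_head_bounds m eps (z : Rn (S m)) : 0 < eps -> cone eps z -> 0 < z Fin.F1 < eps.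
Proof.
  intros He [H1 H2]; pose proof (enorm_nonneg _ (fun i : Fin.t m => z (Fin.FS i))); nra.
Qed.

Lemma cone_shear_bounds m eps (z : Rn (S m)) :
  0 < eps <= 1 -> cone eps z -> forall i, 0 <= shear 1 z i <= 2 * eps.
Proof.
  intros He Hz; pose proof (cone_head_bounds _ _ _ (proj1 He) Hz) as Hh.
  destruct Hz as [Ht _].
  intros i; pattern i; apply Fin.caseS'; unfold shear; simpl; [lra|].
  intros j; pose proof (Rabs_coord_le_enorm _ (fun i : Fin.t m => z (Fin.FS i)) j) as Hj.
  simpl in Hj; apply Rabs_le_inv in Hj.
  nra.
Qed.

Lemma cone_enorm_lt m eps (z : Rn (S m)) : 0 < eps <= 1 -> cone eps z -> enorm z < 2 * eps.
Proof.
  intros He Hz; pose proof (cone_head_bounds _ _ _ (proj1 He) Hz); destruct Hz as [Ht _].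
  rewrite enorm_head_tail; eapply Rle_lt_trans; [apply sqrt_sum_sq_le|].
  rewrite Rabs_right, (Rabs_right (enorm _)) by (apply Rle_ge; auto using enorm_nonneg; lra).
  unfold rtail; nra.
Qed.

Definition far_side {n : nat} (lo hi w : Rn n) : Rn n :=
  fun i => if Rle_dec (w i) ((lo i + hi i) / 2) then 1 else -1.

Lemma far_side_sign n (lo hi w : Rn n) : is_sign (far_side lo hi w).
Proof. intros i; unfold far_side; destruct Rle_dec; ring. Qed.

Lemma box_step_far_side n (lo hi w v : Rn n) del :
  box lo hi w -> (forall i, del <= hi i - lo i) -> (forall i, 0 <= v i <= del / 2) ->
  box lo hi (fun i => w i + flip (far_side lo hi w) v i).
Proof.
  intros Hw Hdel Hv i; specialize (Hw i); specialize (Hdel i); specialize (Hv i).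
  unfold flip, far_side; destruct Rle_dec; lra.
Qed.

(** * Pieces: preimages of boxes under bi-Lipschitz charts *)

Record chart_box (n : nat) := mk_chart_box {
  cb_center : Rn n; cb_radius : R; cb_lip : R; cb_map : Rn n -> Rn n;
  cb_lo : Rn n; cb_hi : Rn n; cb_width : R }.
Arguments mk_chart_box {n}.
Arguments cb_center {n}. Arguments cb_radius {n}. Arguments cb_lip {n}. Arguments cb_map {n}.
Arguments cb_lo {n}. Arguments cb_hi {n}. Arguments cb_width {n}.

Definition piece {n : nat} (d : chart_box n) : Rn n -> Prop :=
  fun y => ball (cb_center d) (cb_radius d) y /\ box (cb_lo d) (cb_hi d) (cb_map d y).

(* The half ball leaves room for balls of radius [cb_radius d / 2] around the points of the
   piece. *)
Definition chart_box_ok {n : nat} (d : chart_box n) : Prop :=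
  0 < cb_radius d /\ 0 < cb_lip d /\ 0 < cb_width d /\
  bilip_on (cb_lip d) (cb_map d) (ball (cb_center d) (cb_radius d)) /\
  (forall z, box (cb_lo d) (cb_hi d) z ->
     exists y, ball (cb_center d) (cb_radius d / 2) y /\ cb_map d y = z) /\
  (forall i, cb_width d <= cb_hi d i - cb_lo d i).

Lemma piece_compact n (d : chart_box n) : chart_box_ok d -> rn_compact (piece d).
Proof.
  intros [HR [HL [_ [HG [Hsur _]]]]].
  apply (rn_compact_bilip_preimage _ _ _ (cb_lip d)); auto using box_compact.
  intros z Hz; destruct (Hsur z Hz) as [y [Hy Hyz]]; exists y; split; auto.
  unfold ball in *; lra.
Qed.

Lemma piece_near_center n (d : chart_box n) x0 :
  chart_box_ok d -> piece d x0 -> edist (cb_center d) x0 < cb_radius d / 2.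
Proof.
  intros [HR [HL [_ [HG [Hsur _]]]]] [Hx0 Hb].
  destruct (Hsur _ Hb) as [y [Hy Hyx]].
  assert (HyR : ball (cb_center d) (cb_radius d) y) by (unfold ball in *; lra).
  destruct (HG y x0 HyR Hx0) as [H1 _]; rewrite Hyx, edist_refl in H1.
  pose proof (edist_nonneg _ y x0); assert (edist y x0 = 0) by nra.
  pose proof (edist_triangle _ (cb_center d) y x0); unfold ball in Hy; lra.
Qed.

Lemma piece_cone m (d : chart_box (S m)) x0 r eps :
  chart_box_ok d -> piece d x0 -> 0 < r <= cb_radius d / 2 -> 0 < eps <= 1 ->
  4 * eps <= cb_width d -> eps * (1 + INR m) <= cb_lip d -> 2 * eps * (1 + INR m) <= r * cb_lip d ->
  exists F : Rn (S m) -> Rn (S m), F x0 = origin /\ bilip_on eps F (ball x0 r) /\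
    forall z, cone eps z -> exists y, piece d y /\ ball x0 r y /\ F y = z.
Proof.
  intros Hd Hx0 Hr He Hw HeL HrL.
  pose proof (piece_near_center _ d x0 Hd Hx0) as Hnear.
  destruct Hd as [HR [HL [Hdel [HG [Hsur Hwid]]]]]; destruct Hx0 as [Hx0c Hx0b].
  set (c := cb_center d) in *; set (G := cb_map d) in *; set (L := cb_lip d) in *.
  assert (Hsub : forall y, ball x0 r y -> ball c (cb_radius d) y).
  { intros y Hy; unfold ball in *; pose proof (edist_triangle _ c x0 y); lra. }
  pose proof (pos_INR m).
  set (w := G x0); set (s := far_side (cb_lo d) (cb_hi d) w).
  pose proof (far_side_sign _ (cb_lo d) (cb_hi d) w) as Hs; fold s in Hs.
  exists (fun y => cone_chart s w (G y)); split; [|split].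
  - apply cone_chart_base.
  - apply (bilip_on_comp _ L eps (1 + INR m) G _ (cone_chart_inv s w)); try lra.
    + now apply lipschitz_cone_chart.
    + now apply lipschitz_cone_chart_inv.
    + now apply cone_chart_invK.
    + intros y y' Hy Hy'; apply HG; auto.
  - intros z Hz.
    assert (Hbox : box (cb_lo d) (cb_hi d) (cone_chart_inv s w z)).
    { apply (box_step_far_side _ _ _ _ _ (cb_width d)); auto.
      intros i; pose proof (cone_shear_bounds _ _ _ He Hz i); lra. }
    destruct (Hsur _ Hbox) as [y [Hy Hyz]]; fold G in Hyz.
    assert (HyR : ball c (cb_radius d) y) by (unfold ball in *; lra).
    exists y; split; [split; [exact HyR | unfold G in Hyz; now rewrite Hyz]|split].
    + destruct (HG x0 y Hx0c HyR) as [Hlow _]; fold G L in Hlow.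
      pose proof (lipschitz_cone_chart_inv m s w Hs origin z) as Hlip.
      rewrite cone_chart_inv_origin in Hlip; fold w in Hlow; rewrite <- Hyz in Hlip.
      rewrite edist_origin in Hlip.
      pose proof (cone_enorm_lt _ _ _ He Hz).
      unfold ball; apply (Rmult_lt_reg_l L); [exact HL|]; nra.
    + rewrite Hyz; now apply cone_chartK.
Qed.

Lemma piece_cone_uniform m (d : chart_box (S m)) r :
  chart_box_ok d -> 0 < r <= cb_radius d / 2 ->
  exists e, 0 < e /\ forall eps, 0 < eps <= e -> forall x0, piece d x0 ->
    exists F : Rn (S m) -> Rn (S m), F x0 = origin /\ bilip_on eps F (ball x0 r) /\
      forall z, cone eps z -> exists y, piece d y /\ ball x0 r y /\ F y = z.
Proof.
  intros Hd Hr; pose proof Hd as [_ [HL [Hw _]]]; pose proof (pos_INR m).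
  assert (Hk : 0 < 1 + INR m) by lra.
  set (e1 := Rmin 1 (cb_width d / 4)).
  set (e2 := Rmin (cb_lip d / (1 + INR m)) (r * cb_lip d / (2 * (1 + INR m)))).
  assert (He1 : 0 < e1) by (apply Rmin_glb_lt; lra).
  assert (He2 : 0 < e2) by (apply Rmin_glb_lt; apply Rdiv_lt_0_compat; nra).
  exists (Rmin e1 e2); split; [now apply Rmin_glb_lt|]; intros eps He x0 Hx0.
  assert (eps <= e1 /\ eps <= e2).
  { pose proof (Rmin_l e1 e2); pose proof (Rmin_r e1 e2); lra. }
  assert (e1 <= 1 /\ e1 <= cb_width d / 4) by (split; [apply Rmin_l | apply Rmin_r]).
  assert (Hk1 : e2 <= cb_lip d / (1 + INR m)) by apply Rmin_l.
  assert (Hk2 : e2 <= r * cb_lip d / (2 * (1 + INR m))) by apply Rmin_r.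
  apply (piece_cone m d x0 r eps); auto; try lra.
  - apply Rle_div_mul; [exact Hk | lra].
  - replace (2 * eps * (1 + INR m)) with (eps * (2 * (1 + INR m))) by ring.
    apply Rle_div_mul; lra.
Qed.

Definition union_pieces {n : nat} (l : list (chart_box n)) : Rn n -> Prop :=
  fun y => exists d, In d l /\ piece d y.

Lemma union_pieces_compact n (l : list (chart_box n)) :
  (forall d, In d l -> chart_box_ok d) -> rn_compact (union_pieces l).
Proof. intros Hl; apply rn_compact_list_union; intros d Hd; now apply piece_compact, Hl. Qed.

Lemma union_pieces_cone m (l : list (chart_box (S m))) :
  (forall d, In d l -> chart_box_ok d) -> bilip_cone_condition (union_pieces l).
Proof.
  intros Hl.
  destruct (list_forall_small l (fun d r => r <= cb_radius d / 2)) as [r [Hr Hrl]].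
  { intros d Hd; pose proof (Hl d Hd) as [HR _]; exists (cb_radius d / 2).
    split; [lra | intros; lra]. }
  destruct (list_forall_small l (fun d eps => forall x0, piece d x0 ->
     exists F : Rn (S m) -> Rn (S m), F x0 = origin /\ bilip_on eps F (ball x0 r) /\
       forall z, cone eps z -> exists y, piece d y /\ ball x0 r y /\ F y = z)) as [eps [He Hel]].
  { intros d Hd; apply piece_cone_uniform; [now apply Hl|].
    split; [exact Hr | exact (Hrl d Hd r (conj Hr (Rle_refl r)))]. }
  exists r, eps; split; [exact Hr|]; split; [exact He|].
  intros x0 [Hcl _]; apply rn_compact_closed in Hcl; [|now apply union_pieces_compact].
  destruct Hcl as [d [Hd Hx0]].
  destruct (Hel d Hd eps (conj He (Rle_refl eps)) x0 Hx0) as [F [HF0 [HFb HFc]]].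
  exists F; split; [intros i; now rewrite HF0|]; split; [exact HFb|].
  intros z Hz; destruct (HFc z Hz) as [y [Hy [Hyr Hyz]]].
  exists y; split; [exists d; auto | split; [exact Hyr | intros i; now rewrite Hyz]].
Qed.

(** * Local pieces *)

Lemma halfspace_chart_closure m (Omega : Rn (S m) -> Prop) x rp L (Phi : Rn (S m) -> Rn (S m)) :
  0 < L -> bilip_on L Phi (ball x rp) ->
  is_open (fun z => exists y, ball x rp y /\ forall i, Phi y i = z i) ->
  (forall y, ball x rp y -> (Omega y <-> 0 < Phi y Fin.F1)) ->
  forall y, ball x rp y -> (rn_closure Omega y <-> 0 <= Phi y Fin.F1).
Proof.
  intros HL HPhi Himg HOm y Hy; split.
  - intros Hcl; apply Rnot_lt_le; intros Hneg.
    set (r := Rmin (rp - edist x y) (L * - Phi y Fin.F1)).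
    assert (Hr : 0 < r) by (unfold ball in Hy; apply Rmin_glb_lt; nra).
    destruct (Hcl r Hr) as [y' [Oy' Hyy']].
    assert (r <= rp - edist x y /\ r <= L * - Phi y Fin.F1) by (split; [apply Rmin_l | apply Rmin_r]).
    assert (Hy' : ball x rp y') by (unfold ball in *; pose proof (edist_triangle _ x y y'); lra).
    apply (HOm y' Hy') in Oy'.
    pose proof (bilip_up _ _ _ _ y y' HL HPhi Hy Hy').
    pose proof (Rabs_le_inv _ _ (Rabs_coord_le_edist _ (Phi y) (Phi y') Fin.F1)).
    nra.
  - intros Hnn e He.
    destruct (Himg (Phi y)) as [t [Ht Hball]]; [exists y; split; auto|].
    set (s := Rmin (t / 2) (L * e / 2)).
    assert (Hs : 0 < s) by (apply Rmin_glb_lt; nra).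
    assert (s <= t / 2 /\ s <= L * e / 2) by (split; [apply Rmin_l | apply Rmin_r]).
    set (z := fun i => Phi y i + s * (1 - tail_ind i)).
    assert (Hz : edist (Phi y) z = s).
    { unfold edist, z; rewrite (enorm_ext _ _ (fun i => (- s) * (1 - tail_ind i))) by (intros; ring).
      rewrite enorm_scale, Rabs_Ropp, Rabs_right, enorm_head_unit by lra; ring. }
    destruct (Hball z) as [y' [Hy' Hy'z]]; [unfold ball; lra|].
    exists y'; split.
    + apply (HOm y' Hy'); rewrite Hy'z; unfold z; simpl; lra.
    + pose proof (HPhi y y' Hy Hy') as [Hlo _].
      rewrite (edist_ext _ (Phi y) (Phi y) (Phi y') z), Hz in Hlo by auto.
      nra.
Qed.

Definition covers_locally {n : nat} (K U : Rn n -> Prop) (d : chart_box n) (O : Rn n -> Prop) :=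
  chart_box_ok d /\ rn_subset (piece d) U /\ is_open O /\ (forall y, K y -> O y -> piece d y).

(* [S] is read in the chart [Phi] as the set where the coordinates with [a i = 0] are
   nonnegative: the whole space near an interior point, a half space at a boundary point. *)
Lemma chart_piece n (S V U K : Rn n -> Prop) x rp L tau (Phi : Rn n -> Rn n) (a : Rn n) :
  0 < rp -> 0 < L -> 0 < tau -> Phi x = origin -> bilip_on L Phi (ball x rp) ->
  (forall z, ball origin tau z -> exists y, ball x rp y /\ Phi y = z) ->
  (forall i, a i = 0 \/ a i = 1) ->
  (forall y, ball x rp y -> (S y <-> forall i, a i = 0 -> 0 <= Phi y i)) ->
  is_open V -> V x -> (forall y, U y <-> V y /\ S y) -> rn_subset K S ->
  exists d O, covers_locally K U d O /\ O x.
Proof.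
  intros Hrp HL Htau HPx HPhi Hsur Ha HS HV Vx HUV HKS.
  destruct (HV x Vx) as [rV [HrV HbV]].
  set (mu := Rmin tau (Rmin (L * rp / 2) (L * rV))).
  assert (Hmu : 0 < mu) by (repeat apply Rmin_glb_lt; nra).
  assert (Hmu1 : mu <= tau) by apply Rmin_l.
  assert (Hmu2 : mu <= L * rp / 2) by (eapply Rle_trans; [apply Rmin_r | apply Rmin_l]).
  assert (Hmu3 : mu <= L * rV) by (eapply Rle_trans; [apply Rmin_r | apply Rmin_r]).
  pose proof (pos_INR n).
  set (del := mu / (2 * (1 + INR n))).
  assert (Hdel : 0 < del) by (apply Rdiv_lt_0_compat; lra).
  assert (Hnd : (1 + INR n) * del = mu / 2) by (unfold del; field; lra).
  set (lo := fun i => - del * a i); set (hi := fun _ : Fin.t n => del).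
  assert (Hbox : forall z, box lo hi z -> edist origin z <= mu / 2).
  { intros z Hz; eapply Rle_trans; [apply (edist_le_coord_bound _ _ _ del)|nra].
    intros i; specialize (Hz i); unfold lo, hi, origin in *; apply Rabs_le.
    destruct (Ha i) as [E|E]; rewrite E in *; lra. }
  assert (Hnear : forall y, ball x rp y -> L * edist x y <= edist origin (Phi y)).
  { intros y Hy; rewrite <- HPx; apply HPhi; auto; now apply ball_center. }
  set (rO := Rmin (L * del) rp).
  assert (HrO : 0 < rO) by (apply Rmin_glb_lt; nra).
  assert (rO <= L * del /\ rO <= rp) by (split; [apply Rmin_l | apply Rmin_r]).
  exists (mk_chart_box x rp L Phi lo hi del), (ball x rO).
  split; [split; [|split; [|split]]|now apply ball_center].
  - split; [exact Hrp|]; split; [exact HL|]; split; [exact Hdel|]; split; [exact HPhi|]; split.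
    + intros z Hz; destruct (Hsur z) as [y [Hy Hyz]]; [pose proof (Hbox z Hz); unfold ball; lra|].
      exists y; split; [|exact Hyz]; pose proof (Hnear y Hy); pose proof (Hbox z Hz).
      subst z; unfold ball; simpl; nra.
    + intros i; unfold lo, hi; simpl; destruct (Ha i) as [E|E]; rewrite E; lra.
  - intros y [Hy Hb]; simpl in *; apply HUV; split.
    + apply HbV; pose proof (Hnear y Hy); pose proof (Hbox _ Hb); unfold ball; nra.
    + apply (HS y Hy); intros i Hi; specialize (Hb i); unfold lo in Hb; rewrite Hi in Hb; lra.
  - apply ball_open.
  - intros y Ky Hy; unfold ball in Hy.
    assert (HyR : ball x rp y) by (unfold ball; lra).
    split; [exact HyR|]; simpl.
    assert (Hc : edist origin (Phi y) < del).
    { pose proof (bilip_up _ _ _ _ x y HL HPhi (ball_center _ x rp Hrp) HyR); rewrite HPx in *; nra. }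
    intros i; pose proof (Rabs_le_inv _ _ (Rabs_coord_le_edist _ origin (Phi y) i)).
    unfold lo, hi, origin in *; destruct (Ha i) as [E|E]; rewrite E.
    + pose proof (proj1 (HS y HyR) (HKS y Ky) i E); lra.
    + lra.
Qed.

Lemma local_piece m (Omega V U K : Rn (S m) -> Prop) x :
  is_open Omega -> bilip_halfspace_domain Omega -> is_open V ->
  (forall y, U y <-> V y /\ rn_closure Omega y) ->
  rn_subset K (rn_closure Omega) -> rn_subset K U -> K x ->
  exists d O, covers_locally K U d O /\ O x.
Proof.
  intros HO Hlip HV HUV HKM HKU Kx.
  assert (Vx : V x) by apply HUV, HKU, Kx.
  destruct (classic (Omega x)) as [Ox|NOx].
  - destruct (HO x Ox) as [r [Hr Hball]].
    apply (chart_piece _ (rn_closure Omega) V U K x r 1 r (fun y i => y i - x i) (fun _ => 1));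
      auto; try lra.
    + apply functional_extensionality; intros; unfold origin; ring.
    + intros y y' _ _.
      replace (edist (fun i => y i - x i) (fun i => y' i - x i)) with (edist y y')
        by (unfold edist; apply enorm_ext; intros; ring).
      rewrite Rinv_1; split; lra.
    + intros z Hz; exists (fun i => z i + x i); split.
      * unfold ball in *; rewrite edist_origin in Hz; unfold edist.
        rewrite (enorm_ext _ _ (fun i => -1 * z i)) by (intros; ring).
        rewrite enorm_scale, Rabs_left by lra; lra.
      * apply functional_extensionality; intros; ring.
    + intros y Hy; split; [intros _ i E; lra|].
      intros _ e He; exists y; split; [now apply Hball | now rewrite edist_refl].
  - assert (Hbd : rn_boundary Omega x).
    { split; [now apply HKM|]; intros e He; exists x; split; [exact NOx | now rewrite edist_refl]. }
    destruct (Hlip x Hbd) as [rp [L [Phi [Hrp [HL [HPx [HPhi [Himg HOm]]]]]]]].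
    assert (HPx' : Phi x = origin) by (apply functional_extensionality; exact HPx).
    destruct (Himg (Phi x)) as [tau [Htau Hball]]; [exists x; split; [now apply ball_center | auto]|].
    apply (chart_piece _ (rn_closure Omega) V U K x rp L tau Phi tail_ind); auto.
    + intros z Hz; rewrite <- HPx' in Hz; destruct (Hball z Hz) as [y [Hy Hyz]].
      exists y; split; [exact Hy | now apply functional_extensionality].
    + apply tail_ind_01.
    + intros y Hy; rewrite (halfspace_chart_closure m Omega x rp L Phi HL HPhi Himg HOm y Hy).
      split; [|intros H; now apply H].
      intros H i; pattern i; apply Fin.caseS'; [intros; exact H | simpl; intros; lra].
Qed.

Theorem lemma6p2 (m : nat) (Omega : Rn (S m) -> Prop)
  (HOmega_open : is_open Omega)
  (HOmega_bdd : rn_bounded Omega)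
  (HOmega_conn : rn_connected Omega)
  (HOmega_ne : exists x, Omega x)
  (HOmega_lip : bilip_halfspace_domain Omega)
  (K U : Rn (S m) -> Prop)
  (HK : rn_compact K) (HKM : rn_subset K (rn_closure Omega))
  (HU : rel_open (rn_closure Omega) U) (HKU : rn_subset K U) :
  exists K' : Rn (S m) -> Prop,
    rn_compact K' /\ rn_subset K K' /\ rn_subset K' U /\ bilip_cone_condition K'.
Proof.
  destruct HU as [V [HV HUV]].
  destruct (HK {p : chart_box (S m) * (Rn (S m) -> Prop) | covers_locally K U (fst p) (snd p)}
              (fun p => snd (proj1_sig p))) as [l Hl].
  - intros [p Hp]; apply Hp.
  - intros x Kx; destruct (local_piece m Omega V U K x) as [d [O [Hd Ox]]]; auto.
    now exists (exist _ (d, O) Hd).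
  - set (ds := map (fun p => fst (proj1_sig p)) l).
    assert (Hds : forall d, In d ds -> chart_box_ok d /\ rn_subset (piece d) U).
    { intros d Hd; apply in_map_iff in Hd as [[p Hp] [<- _]]; split; apply Hp. }
    exists (union_pieces ds); split; [|split; [|split]].
    + apply union_pieces_compact; intros d Hd; apply Hds, Hd.
    + intros x Kx; destruct (Hl x Kx) as [[p Hp] [Hin Hx]].
      exists (fst p); split; [apply (in_map (fun p => fst (proj1_sig p))) in Hin; exact Hin|].
      now apply Hp.
    + intros y [d [Hd Hy]]; now apply (Hds d Hd).
    + apply union_pieces_cone; intros d Hd; apply Hds, Hd.
Qed.
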